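(* Let $G=(V,E)$ be a finite connected graph with $n=|V|$, and consider the edge-averaging process $(f_t)_{t\ge0}$ on $G$ started from an arbitrary (deterministic) function $f_0:V\to[-1,1]$. Then for every $\varepsilon>0$ and every $t>0$, $$\mathbb{P}(\tau_\varepsilon>t)\le\frac{2n}{\varepsilon^2}\exp(-2t/n^2).$$
   Context: Edge-averaging process: each vertex $v\in V$ carries an opinion $f_t(v)\in\mathbb R$ at each time $t\ge 0$. Each edge carries an independent rate-one Poisson clock. When the clock of edge $\{u,v\}$ rings at time $t$, both endpoints update to $f_t(u)=f_t(v)=\frac{f_{t-}(u)+f_{t-}(v)}{2}$, where $f_{t-}(u)=\lim_{s\uparrow t}f_s(u)$; other opinions are unchanged. For $f:V\to\mathbb R$, $\mathrm{osc}(f):=\sup_{u,v\in V}|f(u)-f(v)|$, and $\tau_\varepsilon:=\min\{t\ge 0:\mathrm{osc}(f_t)\le\varepsilon\}$. *)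

From HB Require Import structures.
From mathcomp Require Import all_boot all_order all_algebra.
From mathcomp Require Import all_classical all_reals all_analysis.
Set Implicit Arguments. Unset Strict Implicit. Unset Printing Implicit Defensive.
Import Order.TTheory GRing.Theory Num.Theory.
Local Open Scope ring_scope.

Section EdgeAveraging.
Variables (R : realType) (V : finType).

Definition edges (e : rel V) : {set {set V}} :=
  [set A : {set V} | [exists x, exists y, e x y && (A == [set x; y])]].

(* Oscillation sup_{u,v} |f u - f v| (V finite, so a max; 0 if V empty). *)
Definition osc (f : V -> R) : R :=
  \big[Num.max/0]_(u : V) \big[Num.max/0]_(v : V) `|f u - f v|.

(* Update when the clock of edge A = {u,v} rings: both endpoints take
   the average (f u + f v)/2, other opinions are unchanged. *)
Definition avg_step (f : V -> R) (A : {set V}) : V -> R :=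
  fun x => if x \in A then (\sum_(y in A) f y) / 2 else f x.

Definition states (f0 : V -> R) (s : seq {set V}) : seq (V -> R) :=
  f0 :: scanl avg_step f0 s.

(* Realisation of the ring sequence s (up to time t) keeps the event
   {tau_eps > t}: every configuration visited has oscillation > eps. *)
Definition stays_above (eps : R) (f0 : V -> R) (s : seq {set V}) : bool :=
  all (fun g => eps < osc g) (states f0 s).

(* P(tau_eps > t) for the edge-averaging process with independent rate-one
   Poisson clocks on the edges.  By superposition, the rings of all clocks
   form a Poisson process of rate |E| whose marks are i.i.d. uniform edges;
   hence a given sequence of k rings in [0,t] (with edges s_1..s_k) has
   probability exp(-|E| t) (|E| t)^k / k! * |E|^{-k} = exp(-|E| t) t^k / k!. *)
Definition tail_prob (e : rel V) (f0 : V -> R) (eps t : R) : R :=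
  limn (fun N : nat => \sum_(0 <= k < N)
     (expR (- ((#|edges e|)%:R * t)) * t ^+ k / (k`!)%:R *
      (#|[set s : k.-tuple {set V} |
          all (fun A => A \in edges e) s && stays_above eps f0 s]|)%:R)).

End EdgeAveraging.

(* Let Q f := sum_v (f v - mean f)^2.  When the clock of an edge {x, y} rings, Q drops by
   (f x - f y)^2 / 2.  A Poincare inequality along a simple path from a maximiser to a
   minimiser of f shows that the total drop over all edges is at least 2 Q / n^2, so
   summing Q over all k-sequences of edges gives at most (|E| - 2/n^2)^k Q f0 <= (|E| - 2/n^2)^k n.
   Since osc f > eps forces 2 Q f > eps^2, at most 2n/eps^2 (|E| - 2/n^2)^k sequences of k
   rings keep the oscillation above eps, and weighting them by e^{-|E|t} t^k / k! sums to
   the bound 2n/eps^2 e^{-2t/n^2}. *)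

From HB Require Import structures.
From mathcomp Require Import all_boot all_order all_algebra.
From mathcomp Require Import all_classical all_reals all_analysis.
From mathcomp Require Import ring lra.
Import Order.TTheory GRing.Theory Num.Theory.
Local Open Scope ring_scope.

Lemma sub_last_telescope {R : zmodType} {T : Type} (f : T -> R) x p :
  f x - f (last x p) = \sum_(d <- pairmap (fun u v => f u - f v) x p) d.
Proof.
elim: p x => [|y p IHp] x /=; first by rewrite big_nil subrr.
by rewrite big_cons -IHp addrA subrK.
Qed.

Lemma sqr_sum_le_size {R : realFieldType} {T : Type} (r : seq T) (g : T -> R) :
  (\sum_(i <- r) g i) ^+ 2 <= (size r)%:R * \sum_(i <- r) g i ^+ 2.
Proof.
case: r => [|i0 r]; first by rewrite !big_nil expr0n mulr0.
set r' := i0 :: r; set S := \sum_(i <- r') g i; set Q := \sum_(i <- r') g i ^+ 2.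
set k : R := (size r')%:R; have k_gt0 : 0 < k by [].
have : \sum_(i <- r') 2 * k * S * g i <= \sum_(i <- r') (k ^+ 2 * g i ^+ 2 + S ^+ 2).
  by apply: ler_sum => i _; have := sqr_ge0 (k * g i - S); rewrite !expr2; nra.
rewrite -mulr_sumr big_split -mulr_sumr /= big_const_seq count_predT iter_addr_0.
rewrite -/S -/Q -mulr_natr -/k => sumP.
by rewrite -(ler_pM2l k_gt0); nra.
Qed.

Lemma sum_tuple0 {R : nmodType} {T : finType} (F : 0.-tuple T -> R) :
  \sum_(s : 0.-tuple T) F s = F [tuple].
Proof. by rewrite (big_pred1 [tuple]) // => s; apply/esym/eqP; exact: tuple0. Qed.

Lemma sum_tupleS {R : nmodType} {T : finType} k (F : k.+1.-tuple T -> R) :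
  \sum_(s : k.+1.-tuple T) F s = \sum_(x : T) \sum_(s : k.-tuple T) F [tuple of x :: s].
Proof.
rewrite pair_big /= (reindex (fun p : T * k.-tuple T => [tuple of p.1 :: p.2])) //=.
exists (fun s => (thead s, [tuple of behead s])) => [[x s] _ | s _] /=.
  by congr pair; apply: val_inj.
by case: s => -[|y l] // sz; apply: val_inj.
Qed.

Lemma lim_series_le_expR {R : realType} (c : nat -> R) (C x : R) :
  0 <= x -> 0 <= C -> (forall k, 0 <= c k) -> (forall k, c k <= C * exp_coeff x k) ->
  limn (fun N => \sum_(0 <= k < N) c k) <= C * expR x.
Proof.
move=> x_ge0 C_ge0 c_ge0 c_le.
have partial_le N : series c N <= C * expR x.
  apply: le_trans (_ : C * series (exp_coeff x) N <= _).
    by rewrite /series /= mulr_sumr; apply: ler_sum => k _; exact: c_le.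
  rewrite ler_wpM2l //; apply: nondecreasing_cvgn_le (is_cvg_series_exp_coeff x) N.
  by apply: nondecreasing_series => k _ _; rewrite /exp_coeff /= divr_ge0 ?exprn_ge0.
have c_cvg : cvgn (fun N => \sum_(0 <= k < N) c k).
  apply: nondecreasing_is_cvgn; first exact: nondecreasing_series.
  by exists (C * expR x) => _ [N _ <-]; exact: partial_le.
by apply: limr_le c_cvg _; exact: nearW.
Qed.

Section SquaredDeviation.
Context {R : realFieldType} {V : finType}.
Implicit Types (f : V -> R) (a b : R).
Local Notation n := #|V|.

Definition mean f : R := (\sum_v f v) / n%:R.
Definition sqdev f : R := \sum_v (f v - mean f) ^+ 2.

Lemma sqdev_ge0 f : 0 <= sqdev f.
Proof. by apply: sumr_ge0 => v _; exact: sqr_ge0. Qed.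

Lemma sum_sub_mean f : \sum_v (f v - mean f) = 0.
Proof.
have [n0 | n_gt0] := posnP n.
  by apply: big1 => v _; have := card0_eq n0 v; rewrite !inE.
rewrite sumrB sumr_const -mulr_natr /mean divfK ?subrr //.
by rewrite pnatr_eq0 -lt0n.
Qed.

Lemma sqdev_le_range f a b : (forall v, b <= f v <= a) ->
  sqdev f <= n%:R * (a - b) ^+ 2 / 4.
Proof.
move=> fab; set c := mean f.
(* termwise, (f v - c)^2 - (a + b - 2c)(f v - c) - (a - c)(c - b) = (f v - a)(f v - b) <= 0 *)
have sqdev_le : sqdev f <= n%:R * ((a - c) * (c - b)).
  have -> : n%:R * ((a - c) * (c - b)) =
            \sum_v ((a + b - 2 * c) * (f v - c) + (a - c) * (c - b)).
    by rewrite big_split /= -mulr_sumr sum_sub_mean mulr0 add0r sumr_const mulr_natl.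
  by apply: ler_sum => v _; have /andP[] := fab v; rewrite expr2 -/c; nra.
apply: le_trans sqdev_le _; rewrite -mulrA ler_wpM2l //.
by have := sqr_ge0 (a + b - 2 * c); rewrite !expr2; nra.
Qed.

Lemma sqr_sub_le_sqdev f u v : (f u - f v) ^+ 2 <= 2 * sqdev f.
Proof.
have [-> | uv] := eqVneq u v; first by rewrite subrr expr0n mulr_ge0 ?sqdev_ge0.
rewrite /sqdev (bigD1 u) // (bigD1 v) /=; last by rewrite eq_sym.
set c := mean f; set rest := \sum_(w | _) _.
have : 0 <= rest by apply: sumr_ge0 => w _; exact: sqr_ge0.
by have := sqr_ge0 (f u + f v - 2 * c); rewrite !expr2; nra.
Qed.

Lemma sqdev_le_card f : (forall v, -1 <= f v <= 1) -> sqdev f <= n%:R.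
Proof.
move=> f_range; apply: le_trans (sqdev_le_range f 1 (-1) f_range) _.
by rewrite -mulrA (_ : (1 - -1) ^+ 2 / 4 = 1) ?mulr1 //; field.
Qed.

End SquaredDeviation.

Section AveragingStep.
Context {R : realType} {V : finType}.
Variables (f : V -> R) (x y : V).
Hypothesis xy : x != y.

Lemma sum_split_pair (F : V -> R) :
  \sum_v F v = F x + F y + \sum_(v | (v != x) && (v != y)) F v.
Proof. by rewrite (bigD1 x) // (bigD1 y) 1?eq_sym //= addrA. Qed.

Lemma avg_step_pair v : avg_step f [set x; y] v =
  if (v == x) || (v == y) then (f x + f y) / 2 else f v.
Proof. by rewrite /avg_step !inE big_setU1 ?big_set1 ?inE. Qed.

Lemma avg_step_pair_out v : (v != x) && (v != y) -> avg_step f [set x; y] v = f v.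
Proof. by case/andP=> /negbTE vx /negbTE vy; rewrite avg_step_pair vx vy. Qed.

Lemma mean_avg_step : mean (avg_step f [set x; y]) = mean f.
Proof.
rewrite /mean !(sum_split_pair (avg_step _ _)) (sum_split_pair f) !avg_step_pair.
rewrite !eqxx orbT /= (eq_bigr f) => [|v]; last exact: avg_step_pair_out.
by congr (_ / _); congr (_ + _); field.
Qed.

Lemma sqdev_avg_step :
  sqdev (avg_step f [set x; y]) = sqdev f - (f x - f y) ^+ 2 / 2.
Proof.
rewrite /sqdev mean_avg_step !(sum_split_pair (fun v => (_ - mean f) ^+ 2)).
rewrite !avg_step_pair !eqxx orbT /=.
rewrite (eq_bigr (fun v => (f v - mean f) ^+ 2)) => [|v /avg_step_pair_out -> //].
by rewrite !expr2; field.
Qed.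

End AveragingStep.

Lemma osc_sqr_le_sqdev {R : realType} {V : finType} (f : V -> R) :
  osc f ^+ 2 <= 2 * sqdev f.
Proof.
have sqdev2_ge0 : 0 <= 2 * sqdev f by rewrite mulr_ge0 ?sqdev_ge0.
have osc_ge0 : 0 <= osc f by exact: bigmax_ge_id.
rewrite -(sqr_sqrtr sqdev2_ge0) ler_pXn2r ?nnegrE ?sqrtr_ge0 //.
apply: bigmax_le => [|u _]; first exact: sqrtr_ge0.
apply: bigmax_le => [|v _]; first exact: sqrtr_ge0.
by rewrite -sqrtr_sqr ler_sqrt // sqr_sub_le_sqdev.
Qed.

Lemma osc_card_le1 {R : realType} {V : finType} (f : V -> R) : (#|V| <= 1)%N -> osc f = 0.
Proof.
move/fintype_le1P => V_eq; apply/eqP; rewrite eq_le bigmax_ge_id andbT.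
apply: bigmax_le => // u _; apply: bigmax_le => // v _.
by rewrite (V_eq v u) subrr normr0.
Qed.

Section GraphPoincare.
Context {R : realType} {V : finType}.
Variable e : rel V.
Hypothesis e_irr : irreflexive e.
Implicit Types (f : V -> R) (A : {set V}).
Local Notation E := (edges e).

Lemma edgesP A : reflect (exists x y, e x y /\ A = [set x; y]) (A \in E).
Proof.
rewrite inE; apply: (iffP existsP) => [[x /existsP[y /andP[exy /eqP ->]]]|].
  by exists x, y.
by case=> x [y [exy ->]]; exists x; apply/existsP; exists y; rewrite exy eqxx.
Qed.

Definition sqdev_drop f A := sqdev f - sqdev (avg_step f A).

Lemma sqdev_drop_edge f x y : e x y -> sqdev_drop f [set x; y] = (f x - f y) ^+ 2 / 2.
Proof.
move=> exy; have xy : x != y by apply: contraTneq exy => ->; rewrite e_irr.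
by rewrite /sqdev_drop sqdev_avg_step // opprB addrC subrK.
Qed.

Lemma sqdev_drop_ge0 f A : A \in E -> 0 <= sqdev_drop f A.
Proof. by case/edgesP=> x [y [exy ->]]; rewrite sqdev_drop_edge // divr_ge0 ?sqr_ge0. Qed.

Definition path_edges (x : V) (p : seq V) : seq {set V} :=
  pairmap (fun u v => [set u; v]) x p.

Lemma path_edges_sub x p : path e x p -> {subset path_edges x p <= E}.
Proof.
elim: p x => [|y p IHp] x //= /andP[exy pth] A.
by rewrite inE => /predU1P[-> | /IHp]; [apply/edgesP; exists x, y | exact].
Qed.

Lemma path_edges_subset x p A : A \in path_edges x p -> {subset A <= x :: p}.
Proof.
elim: p x => [|y p IHp] x //=; rewrite inE => /predU1P[-> w | /IHp sub w /sub].
  by rewrite !inE => /orP[] ->; rewrite ?orbT.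
exact: (@mem_behead _ [:: x, y & p]).
Qed.

Lemma uniq_path_edges x p : uniq (x :: p) -> uniq (path_edges x p).
Proof.
elim: p x => [|y p IHp] x //= /andP[xNyp /[dup] uyp /IHp ->]; rewrite andbT.
apply: contra xNyp => /path_edges_subset; apply; exact: setU11.
Qed.

Lemma sum_sqr_path_drop f x p : path e x p ->
  \sum_(d <- pairmap (fun u v => f u - f v) x p) d ^+ 2 =
  2 * \sum_(A <- path_edges x p) sqdev_drop f A.
Proof.
elim: p x => [|y p IHp] x /=; first by rewrite !big_nil mulr0.
case/andP=> exy /IHp IH; rewrite !big_cons IH sqdev_drop_edge // mulrDr.
by congr (_ + _); field.
Qed.

Lemma sqr_path_le_sum_drop f x p : path e x p -> uniq (x :: p) ->
  (f x - f (last x p)) ^+ 2 <= (size p)%:R * (2 * \sum_(A in E) sqdev_drop f A).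
Proof.
move=> pth up; rewrite sub_last_telescope.
apply: le_trans (sqr_sum_le_size _ (fun d => d)) _; rewrite size_pairmap.
rewrite sum_sqr_path_drop // ler_wpM2l // ler_wpM2l //.
rewrite big_uniq ?uniq_path_edges // [leRHS](bigID (mem (path_edges x p))) /=.
have -> : \sum_(A in E | A \in path_edges x p) sqdev_drop f A =
          \sum_(A in path_edges x p) sqdev_drop f A.
  by apply: eq_bigl => A; apply/andb_idl/path_edges_sub.
by rewrite lerDl sumr_ge0 // => A /andP[AE _]; exact: sqdev_drop_ge0.
Qed.

Hypothesis e_conn : forall x y : V, connect e x y.
Local Notation n := #|V|.

Lemma card_edges_gt0 : (1 < n)%N -> (0 < #|E|)%N.
Proof.
case/card_gt1P=> x [y [_ _ xy]].
case/connectP: (e_conn x y) => -[_ yx | z p /andP[exz _] _]; first by rewrite yx eqxx in xy.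
by apply/card_gt0P; exists [set x; z]; apply/edgesP; exists x, z.
Qed.

Lemma sqdev_le_sum_drop f : (0 < n)%N ->
  sqdev f <= n%:R ^+ 2 / 2 * \sum_(A in E) sqdev_drop f A.
Proof.
case/card_gt0P=> x0 _; set D := \sum_(A in E) _.
have [xM _ f_le_max] := @arg_maxP _ _ V x0 xpredT f isT.
have [xm _ f_ge_min] := @arg_minP _ _ V x0 xpredT f isT.
have [p pth lastp] := connectP (e_conn xM xm).
case: (shortenP pth) lastp => p' pth' up' _ lastp'.
have size_p' : ((size p')%:R : R) <= n%:R.
  by rewrite ler_nat ltnW // -[(size p').+1]/(size (xM :: p')) -(card_uniqP up') max_card.
have range_le : (f xM - f xm) ^+ 2 <= n%:R * (2 * D).
  apply: le_trans (ler_wpM2r _ size_p').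
    by rewrite lastp'; exact: sqr_path_le_sum_drop.
  by rewrite mulr_ge0 ?sumr_ge0 // => A; exact: sqdev_drop_ge0.
apply: le_trans (@sqdev_le_range _ _ f (f xM) (f xm) _) _.
  by move=> v; apply/andP; split; [exact: f_ge_min | exact: f_le_max].
have n_ge0 : (0 : R) <= n%:R by [].
by rewrite expr2; nra.
Qed.

Lemma sum_sqdev_avg_step_le f : (0 < n)%N ->
  \sum_(A in E) sqdev (avg_step f A) <= (#|E|%:R - 2 / n%:R ^+ 2) * sqdev f.
Proof.
move=> n_gt0; have := sqdev_le_sum_drop f n_gt0; set D := \sum_(A in E) _ => sqdev_le.
rewrite (eq_bigr (fun A => sqdev f - sqdev_drop f A)) => [|A _]; last first.
  by rewrite /sqdev_drop opprB addrC subrK.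
rewrite sumrB sumr_const -/D -[sqdev f *+ _]mulr_natl mulrBl lerD2l lerN2.
have N_gt0 : (0 : R) < n%:R ^+ 2 by rewrite exprn_gt0 // ltr0n.
have -> : 2 / n%:R ^+ 2 * sqdev f = sqdev f / (n%:R ^+ 2 / 2).
  by field; rewrite pnatr_eq0 -lt0n.
by rewrite ler_pdivrMr ?divr_gt0 // mulrC.
Qed.

End GraphPoincare.

Section EdgeSequences.
Context {R : realType} {V : finType}.
Variable e : rel V.
Implicit Types (f : V -> R) (eps t : R).
Local Notation E := (edges e).
Local Notation surviving eps f k :=
  [set s : k.-tuple {set V} | all (fun A => A \in E) s && stays_above eps f s].

Definition sum_sqdev_after k f : R :=
  \sum_(s : k.-tuple {set V} | all (fun A => A \in E) s) sqdev (foldl (@avg_step R V) f s).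

Lemma sum_sqdev_after_le a k f : 0 <= a ->
  (forall g, \sum_(A in E) sqdev (avg_step g A) <= a * sqdev g) ->
  sum_sqdev_after k f <= a ^+ k * sqdev f.
Proof.
move=> a_ge0 step_le; elim: k f => [|k IHk] f.
  by rewrite /sum_sqdev_after big_mkcond sum_tuple0 /= expr0 mul1r.
have -> : sum_sqdev_after k.+1 f = \sum_(A in E) sum_sqdev_after k (avg_step f A).
  rewrite /sum_sqdev_after big_mkcond sum_tupleS [RHS]big_mkcond /=.
  apply: eq_bigr => A _; case: (A \in E); first by rewrite [RHS]big_mkcond.
  by rewrite big1.
apply: le_trans (_ : \sum_(A in E) a ^+ k * sqdev (avg_step f A) <= _).
  by apply: ler_sum => A _; exact: IHk.
by rewrite -mulr_sumr exprSr -mulrA ler_wpM2l ?exprn_ge0.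
Qed.

Lemma stays_above_foldl eps f s : stays_above eps f s -> eps < osc (foldl (@avg_step R V) f s).
Proof.
rewrite /stays_above /states /=; elim: s f => [|A s IHs] f /=; first by rewrite andbT.
by case/andP=> _ /IHs.
Qed.

Lemma card_surviving_le eps k f : 0 < eps ->
  (#|surviving eps f k|)%:R <= 2 / eps ^+ 2 * sum_sqdev_after k f.
Proof.
move=> eps_gt0; rewrite -sum1_card natr_sum /sum_sqdev_after mulr_sumr.
rewrite big_mkcond [leRHS]big_mkcond; apply: ler_sum => s _; rewrite inE.
case: ifP => [/andP[-> /stays_above_foldl osc_gt] | _]; last first.
  by case: ifP => // _; rewrite mulr_ge0 ?divr_ge0 ?sqr_ge0 ?sqdev_ge0.
have := osc_sqr_le_sqdev (foldl (@avg_step R V) f s).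
set g := foldl _ _ _ in osc_gt *; move=> osc_le.
rewrite mulrC mulrA ler_pdivlMr ?exprn_gt0 // mul1r mulrC (le_trans _ osc_le) //.
by rewrite ler_pXn2r ?nnegrE ?ltW // (lt_trans eps_gt0 osc_gt).
Qed.

Lemma tail_prob_eq0 f eps t : osc f <= eps -> tail_prob e f eps t = 0.
Proof.
move=> osc_le; rewrite /tail_prob (_ : (fun N => _) = fun=> 0) ?lim_cst //.
apply/funext => N; apply: big1 => k _; rewrite [X in _ * X%:R](_ : _ = 0)%N ?mulr0 //.
apply/eqP; rewrite cards_eq0; apply/eqP/setP => s.
by rewrite !inE /stays_above /states /= ltNge osc_le andbF.
Qed.

Lemma tail_prob_le f eps t a q : 0 < eps -> 0 <= t -> 0 <= a ->
  (forall g, \sum_(A in E) sqdev (avg_step g A) <= a * sqdev g) -> sqdev f <= q ->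
  tail_prob e f eps t <= 2 * q / eps ^+ 2 * expR (- ((#|E|%:R - a) * t)).
Proof.
move=> eps_gt0 t_ge0 a_ge0 step_le sqdev_le.
have q_ge0 : 0 <= q := le_trans (sqdev_ge0 f) sqdev_le.
have card_le k : (#|surviving eps f k|)%:R <= 2 / eps ^+ 2 * (a ^+ k * q).
  apply: le_trans (card_surviving_le eps k f eps_gt0) _.
  rewrite ler_wpM2l ?divr_ge0 ?sqr_ge0 //.
  by apply: le_trans (sum_sqdev_after_le a k f a_ge0 step_le) _; rewrite ler_wpM2l ?exprn_ge0.
rewrite (_ : - _ = - (#|E|%:R * t) + t * a); last by ring.
rewrite expRD mulrA; set C := _ * expR _.
rewrite /tail_prob; apply: lim_series_le_expR => [||k|k].
- exact: mulr_ge0.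
- by rewrite mulr_ge0 ?expR_ge0 ?divr_ge0 ?sqr_ge0 ?mulr_ge0.
- by rewrite !mulr_ge0 ?expR_ge0 ?exprn_ge0 ?invr_ge0.
have weight_ge0 : 0 <= expR (- (#|E|%:R * t)) * t ^+ k / k`!%:R.
  by rewrite !mulr_ge0 ?expR_ge0 ?exprn_ge0 ?invr_ge0.
apply: le_trans (ler_wpM2l weight_ge0 (card_le k)) _.
by rewrite /C /exp_coeff /= exprMn le_eqVlt; apply/predU1P; left; ring.
Qed.

End EdgeSequences.

Theorem proposition3p1 (R : realType) (V : finType) (e : rel V)
  (e_sym : symmetric e) (e_irr : irreflexive e)
  (e_conn : forall x y : V, connect e x y)
  (f0 : V -> R) (hf0 : forall v, -1 <= f0 v <= 1)
  (eps t : R) (heps : 0 < eps) (ht : 0 < t) :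
  tail_prob e f0 eps t <=
    (2 * (#|V|)%:R) / eps ^+ 2 * expR (- (2 * t) / (#|V|)%:R ^+ 2).
Proof.
have [n_le1 | n_gt1] := leqP #|V| 1.
  rewrite tail_prob_eq0; first by rewrite mulr_ge0 ?expR_ge0 ?divr_ge0 ?sqr_ge0.
  by rewrite osc_card_le1 // ltW.
have n_gt0 := ltnW n_gt1.
set a : R := #|edges e|%:R - 2 / #|V|%:R ^+ 2.
have a_ge0 : 0 <= a.
  have n_ge2 : (2 : R) <= #|V|%:R by rewrite ler_nat.
  have E_ge1 : (1 : R) <= #|edges e|%:R by rewrite ler1n (card_edges_gt0 _ e_conn n_gt1).
  by rewrite subr_ge0 ler_pdivrMr ?exprn_gt0 ?ltr0n // expr2; nra.
have step_le g : \sum_(A in edges e) sqdev (avg_step g A) <= a * sqdev g.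
  exact: sum_sqdev_avg_step_le.
apply: le_trans (tail_prob_le e _ _ _ a _ heps (ltW ht) a_ge0 step_le (sqdev_le_card _ hf0)) _.
rewrite le_eqVlt; apply/predU1P; left; congr (_ * expR _).
by rewrite /a; field; rewrite pnatr_eq0 -lt0n.
Qed.
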